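(* Let $m>1$ and $a\in\mathbb{Z}_m$ with $2a^2-2a+1\equiv0\pmod m$. Then the quadratical quasigroup $(\mathbb{Z}_m,\cdot)$, $x\cdot y=ax+(1-a)y$, is not isomorphic to its dual $(\mathbb{Z}_m,\circ)$, $x\circ y=(1-a)x+ay$; i.e. no quadratical quasigroup induced by $\mathbb{Z}_m$ is self-dual.
   Context: The dual of a groupoid $(Q,\cdot)$ is $(Q,* )$ with $x*y=y\cdot x$; a groupoid is self-dual if it is isomorphic to its dual. Every quadratical quasigroup induced by the additive group $\mathbb{Z}_m$ has the form $x\cdot y=ax+(1-a)y$ with $2a^2-2a+1\equiv0\pmod m$. *)

From mathcomp Require Import all_boot all_algebra.
Set Implicit Arguments. Unset Strict Implicit. Unset Printing Implicit Defensive.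
Import GRing.Theory.
Local Open Scope ring_scope.

Definition dual_op (T : Type) (op : T -> T -> T) : T -> T -> T :=
  fun x y => op y x.

Definition groupoid_iso (T U : Type) (op1 : T -> T -> T) (op2 : U -> U -> U)
  (f : T -> U) : Prop :=
  bijective f /\ forall x y, f (op1 x y) = op2 (f x) (f y).

Definition groupoid_isomorphic (T U : Type) (op1 : T -> T -> T)
  (op2 : U -> U -> U) : Prop := exists f : T -> U, groupoid_iso op1 op2 f.

Definition self_dual (T : Type) (op : T -> T -> T) : Prop :=
  groupoid_isomorphic op (dual_op op).

Definition zm_quad_op (m : nat) (a : 'Z_m) : 'Z_m -> 'Z_m -> 'Z_m :=
  fun x y => a * x + (1 - a) * y.

From mathcomp Require Import all_boot all_algebra.
From mathcomp Require Import ring.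
Set Implicit Arguments.
Unset Strict Implicit.
Import GRing.Theory.
Local Open Scope ring_scope.

(* An isomorphism f from (Z_m, .) onto its dual is an affine homomorphism
   from x.y = a x + (1-a) y to x o y = (1-a) x + a y.  As a and 1-a are
   units, the translate g := f - f 0 is additive, hence g x = x * g 1 on Z_m.
   Evaluating at a = a.1 + (1-a).0 gives a g 1 = (1-a) g 1, i.e.
   (2a-1) g 1 = 0; but (2a-1)^2 = -1, so g 1 = 0 and f 1 = f 0, contradicting
   injectivity. *)

Section AffineHomomorphism.

Variables (R : comUnitRingType) (a c : R) (f : R -> R).
Hypothesis f_hom : forall x y, f (a * x + (1 - a) * y) = c * f x + (1 - c) * f y.

Let g x := f x - f 0.
Let g0 : g 0 = 0. Proof. by rewrite /g subrr. Qed.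

Lemma affine_hom_translate x y :
  g (a * x + (1 - a) * y) = c * g x + (1 - c) * g y.
Proof. by rewrite /g f_hom; ring. Qed.

Lemma affine_hom_translate_additive :
  a \is a GRing.unit -> 1 - a \is a GRing.unit -> {morph g : u v / u + v}.
Proof.
move=> ua ub u v.
have gl x : g (a * x) = c * g x.
  by have := affine_hom_translate x 0; rewrite mulr0 addr0 g0 mulr0 addr0.
have gr y : g ((1 - a) * y) = (1 - c) * g y.
  by have := affine_hom_translate 0 y; rewrite mulr0 add0r g0 mulr0 add0r.
rewrite -{1}(mulVKr ua u) -{1}(mulVKr ub v) affine_hom_translate.
by rewrite -gl -gr !mulVKr.
Qed.

Lemma affine_hom_scalar_annihilator :
  (forall x, g x = x * g 1) -> (a - c) * g 1 = 0.
Proof.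
move=> g_scale; have := affine_hom_translate 1 0.
by rewrite mulr1 mulr0 addr0 g0 mulr0 addr0 g_scale mulrBl => ->; rewrite subrr.
Qed.

End AffineHomomorphism.

Lemma Zp_additive_scale (m : nat) (g : 'Z_m -> 'Z_m) :
  {morph g : u v / u + v} -> forall x, g x = x * g 1.
Proof.
move=> g_add x; rewrite -(natr_Zp x).
elim: (nat_of_ord x) => [|k IHk].
  by rewrite mul0r; apply: (@addrI _ (g 0)); rewrite -g_add !addr0.
by rewrite mulrS g_add IHk mulrDl mul1r.
Qed.

Section QuadraticalUnits.

Variables (R : comUnitRingType) (a : R).
Hypothesis quad_a : 2 * a ^+ 2 - 2 * a + 1 = 0.

Lemma quadratical_unit_l : a \is a GRing.unit.
Proof. by apply/unitrPr; exists (2 - 2 * a); rewrite -[RHS]subr0 -quad_a; ring. Qed.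

Lemma quadratical_unit_r : 1 - a \is a GRing.unit.
Proof. by apply/unitrPr; exists (2 * a); rewrite -[RHS]subr0 -quad_a; ring. Qed.

Lemma quadratical_unit_diff : a - (1 - a) \is a GRing.unit.
Proof.
apply/unitrPr; exists (1 - 2 * a).
by rewrite -[RHS]subr0 -(mulr0 2) -quad_a; ring.
Qed.

End QuadraticalUnits.

Theorem corollary9p5 (m : nat) (a : 'Z_m) :
  (1 < m)%N ->
  2 * a ^+ 2 - 2 * a + 1 = 0 ->
  ~ self_dual (zm_quad_op a).
Proof.
move=> _ quad_a [f [[f' fK _] f_hom]].
have f_affine x y : f (a * x + (1 - a) * y) = (1 - a) * f x + (1 - (1 - a)) * f y.
  by rewrite [LHS]f_hom /dual_op /zm_quad_op subKr addrC.
have f_add := affine_hom_translate_additive f_affine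
  (quadratical_unit_l quad_a) (quadratical_unit_r quad_a).
have := affine_hom_scalar_annihilator f_affine (Zp_additive_scale f_add).
rewrite -[X in _ = X](mulr0 (a - (1 - a))) => /(mulrI (quadratical_unit_diff quad_a)).
move=> /eqP; rewrite subr_eq0 => /eqP f10.
by apply/eqP: (oner_neq0 'Z_m); rewrite -(fK 1) f10 fK.
Qed.
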